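(* Let $t$ be a closed $\lambda$-term. If there is a derivation $\pi\triangleright\ \vdash^{(m,e)} t : L$ (with empty type context) in the silly multi type system, then there are an abstraction $v$ and a reduction sequence $d: t\to_{\beta_v}^* v$ with $|d|\leq m$.
   Context: $\lambda$-terms $t ::= x\mid\lambda x.t\mid tu$; values are abstractions. CbV contexts $V ::= \langle\cdot\rangle\mid tV\mid Vt$; root rule $(\lambda x.t)v\mapsto_{\beta_v} t\{x:=v\}$ for $v$ a value (capture-avoiding meta-level substitution); $\to_{\beta_v}$ is its closure under CbV contexts; $|d|$ is the length of $d$. Silly multi types: linear types $L ::= \mathtt{n} \mid M\multimap L$; multi types $M ::= [L_i]_{i\in I}$ finite multisets ($\mathbf{0}$ empty, $\uplus$ sum). Type contexts $\Gamma$ map variables to multi types with finite support; $\uplus$ pointwise; $\Gamma\setminus\!\!\setminus x$ sets $x$ to $\mathbf{0}$. Rules: (ax) $x:[L]\vdash^{(0,1)} x:L$; (many) from $(\Gamma_i\vdash^{(m_i,e_i)} t : L_i)_{i\in I}$, $I$ finite possibly empty, infer $\uplus_i\Gamma_i\vdash^{(\sum m_i,\sum e_i)} t : [L_i]_{i\in I}$; ($\mathrm{ax}_\lambda$) $\vdash^{(0,0)}\lambda x.t:\mathtt{n}$; ($\lambda$) from $\Gamma\vdash^{(m,e)}t:L$ infer $\Gamma\setminus\!\!\setminus x\vdash^{(m,e)}\lambda x.t:\Gamma(x)\multimap L$; (@) from $\Gamma\vdash^{(m,e)} t : M\multimap L$ and $\Delta\vdash^{(m',e')} u : M\uplus[\mathtt{n}]$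 infer $\Gamma\uplus\Delta\vdash^{(m+m'+1,e+e')} tu : L$. (There is also a rule for explicit substitutions, irrelevant for $\lambda$-terms.) *)

From Stdlib Require Import List Arith Permutation.
Import ListNotations.

Inductive term : Type :=
| Var : nat -> term
| Lam : term -> term
| App : term -> term -> term.

Definition is_value (t : term) : Prop :=
  match t with Lam _ => True | _ => False end.

Fixpoint closed_at (k : nat) (t : term) : Prop :=
  match t with
  | Var n => n < k
  | Lam b => closed_at (S k) b
  | App a b => closed_at k a /\ closed_at k b
  end.

Definition closed (t : term) : Prop := closed_at 0 t.

Fixpoint lift (d c : nat) (t : term) : term :=
  match t with
  | Var n => if n <? c then Var n else Var (n + d)
  | Lam b => Lam (lift d (S c) b)
  | App a b => App (lift d c a) (lift d c b)
  end.

Fixpoint subst (k : nat) (s : term) (t : term) : term :=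
  match t with
  | Var n =>
      if n <? k then Var n
      else if n =? k then lift k 0 s
      else Var (n - 1)
  | Lam b => Lam (subst (S k) s b)
  | App a b => App (subst k s a) (subst k s b)
  end.

Definition beta_subst (t v : term) : term := subst 0 v t.

Inductive step_bv : term -> term -> Prop :=
| sbv_root : forall t v, is_value v -> step_bv (App (Lam t) v) (beta_subst t v)
| sbv_appR : forall t u u', step_bv u u' -> step_bv (App t u) (App t u')
| sbv_appL : forall t t' u, step_bv t t' -> step_bv (App t u) (App t' u).

(* reduction sequences with their length: steps n t u  <->  d : t ->*_{bv} u, |d| = n *)
Inductive steps : nat -> term -> term -> Prop :=
| steps_refl : forall t, steps 0 t t
| steps_cons : forall n t u w, step_bv t u -> steps n u w -> steps (S n) t w.

(* linear types L ::= n | M -o L ; multi types M are finite multisets,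
   represented as lists taken up to permutation (see mt_equiv). *)
Inductive ltype : Type :=
| Tn : ltype
| Tarr : list ltype -> ltype -> ltype.

Definition mtype := list ltype.

Inductive lt_equiv : ltype -> ltype -> Prop :=
| lte_n : lt_equiv Tn Tn
| lte_arr : forall M M' M'' L L',
    Permutation M M'' -> Forall2 lt_equiv M'' M' -> lt_equiv L L' ->
    lt_equiv (Tarr M L) (Tarr M' L').

Definition mt_equiv (M M' : mtype) : Prop :=
  exists M'', Permutation M M'' /\ Forall2 lt_equiv M'' M'.

(* type contexts: variable (de Bruijn index) |-> multi type; finite support is
   automatic for the contexts built by the rules *)
Definition ctx := nat -> mtype.
Definition ctx_empty : ctx := fun _ => [].
Definition ctx_union (G D : ctx) : ctx := fun x => G x ++ D x.
Definition ctx_single (x : nat) (M : mtype) : ctx :=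
  fun y => if y =? x then M else [].
(* context below a binder: the bound variable 0 is removed (G \\ x) *)
Definition ctx_tail (G : ctx) : ctx := fun y => G (S y).

(* has_type G t L m e  :  G |-^(m,e) t : L
   has_mtype G t M m e :  G |-^(m,e) t : M  (rule many) *)
Inductive has_type : ctx -> term -> ltype -> nat -> nat -> Prop :=
| ty_ax : forall x L, has_type (ctx_single x [L]) (Var x) L 0 1
| ty_axlam : forall t, has_type ctx_empty (Lam t) Tn 0 0
| ty_lam : forall G t L m e,
    has_type G t L m e -> has_type (ctx_tail G) (Lam t) (Tarr (G 0) L) m e
| ty_app : forall G D t u M N L m e m' e',
    has_type G t (Tarr M L) m e ->
    has_mtype D u N m' e' ->
    mt_equiv N (M ++ [Tn]) ->
    has_type (ctx_union G D) (App t u) L (m + m' + 1) (e + e')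
with has_mtype : ctx -> term -> mtype -> nat -> nat -> Prop :=
| mty_nil : forall t, has_mtype ctx_empty t [] 0 0
| mty_cons : forall G D t L M m e m' e',
    has_type G t L m e -> has_mtype D t M m' e' ->
    has_mtype (ctx_union G D) t (L :: M) (m + m') (e + e').

Definition ctx_is_empty (G : ctx) : Prop := forall x, G x = [].

(* A realizability argument with step budgets. A closed value realizes [n] with any
   budget, and realizes [M -o L] with budget [k] if it is an abstraction whose body,
   instantiated by any closed value realizing [M] with budget [j], reaches within
   [k + j] steps a value realizing [L] with the remaining budget; a multiset is
   realized with budget [j] when the budgets of its elements add up to at most [j].
   By induction on derivations, a term typed with first index [m] whose free
   variables are instantiated by closed values realizing their context types with
   total budget [c] reaches within [m + c] steps a value realizing its type: each
   application rule pays exactly its own beta step. For the rule many, the values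
   reached by the premises coincide, together with their step counts, because CbV
   reduction has the diamond property. The theorem is the case [c = 0]. *)

From Stdlib Require Import List Arith Lia Permutation.
Import ListNotations.

Lemma closed_at_le t : forall k k', closed_at k t -> k <= k' -> closed_at k' t.
Proof.
  induction t as [n | b IH | a IHa b IHb]; simpl; intros k k' Ht Hk.
  - lia.
  - apply (IH (S k)); [assumption | lia].
  - destruct Ht; split; eauto.
Qed.

Lemma lift_closed t : forall d c, closed_at c t -> lift d c t = t.
Proof.
  induction t as [n | b IH | a IHa b IHb]; simpl; intros d c Ht.
  - now apply Nat.ltb_lt in Ht as ->.
  - now rewrite IH.
  - destruct Ht; now rewrite IHa, IHb.
Qed.

Lemma subst_closed t : forall k s, closed_at k t -> subst k s t = t.
Proof.
  induction t as [n | b IH | a IHa b IHb]; simpl; intros k s Ht.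
  - now apply Nat.ltb_lt in Ht as ->.
  - now rewrite IH.
  - destruct Ht; now rewrite IHa, IHb.
Qed.

Lemma closed_at_subst t : forall n k s,
  closed_at (S n) t -> k <= n -> closed s -> closed_at n (subst k s t).
Proof.
  induction t as [x | b IH | a IHa b IHb]; simpl; intros n k s Ht Hk Hs.
  - destruct (Nat.ltb_spec x k); simpl; [lia |].
    destruct (Nat.eqb_spec x k); simpl; [| lia].
    rewrite lift_closed by exact Hs. apply (closed_at_le s 0); [exact Hs | lia].
  - apply IH; [assumption | lia | assumption].
  - destruct Ht; split; eauto.
Qed.

Lemma subst_comm_closed t : forall k u w, closed u -> closed w ->
  subst k w (subst (S k) u t) = subst k u (subst k w t).
Proof.
  induction t as [n | b IH | a IHa b IHb]; intros k u w Hu Hw; simpl.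
  - assert (Hclosed : forall s, closed s -> forall k', closed_at k' s)
      by (intros s Hs k'; apply (closed_at_le s 0); [exact Hs | lia]).
    destruct (Nat.ltb_spec n (S k)), (Nat.ltb_spec n k), (Nat.eqb_spec n (S k)),
      (Nat.eqb_spec n k); simpl; try lia.
    + now destruct (Nat.ltb_spec n k); [| lia].
    + destruct (Nat.ltb_spec n k), (Nat.eqb_spec n k); try lia.
      rewrite !lift_closed by auto. now rewrite subst_closed by auto.
    + subst n. replace (S k - 1) with k by lia.
      destruct (Nat.ltb_spec k k), (Nat.eqb_spec k k); try lia.
      rewrite !lift_closed by auto. now rewrite subst_closed by auto.
    + destruct (Nat.ltb_spec (n - 1) k), (Nat.eqb_spec (n - 1) k); now try lia.
  - now rewrite IH.
  - now rewrite IHa, IHb.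
Qed.

(* For closed [w_i], [substs k [w_0; ...; w_n] t] replaces index [k + i] by [w_i]. *)
Fixpoint substs (k : nat) (rho : list term) (t : term) : term :=
  match rho with
  | [] => t
  | w :: rho' => substs k rho' (subst k w t)
  end.

Lemma substs_Lam rho : forall k b, substs k rho (Lam b) = Lam (substs (S k) rho b).
Proof. induction rho; simpl; auto. Qed.

Lemma substs_App rho : forall k a b,
  substs k rho (App a b) = App (substs k rho a) (substs k rho b).
Proof. induction rho; simpl; auto. Qed.

Lemma substs_closed rho : forall k t, closed t -> substs k rho t = t.
Proof.
  induction rho as [| w rho IH]; simpl; intros k t Ht; [reflexivity |].
  rewrite subst_closed by (apply (closed_at_le t 0); [exact Ht | lia]).
  apply IH, Ht.
Qed.

Lemma substs_Var rho : forall x, Forall closed rho -> x < length rho ->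
  substs 0 rho (Var x) = nth x rho (Var 0).
Proof.
  induction rho as [| w rho IH]; simpl; intros x Hrho Hx; [lia |].
  inversion Hrho as [| ? ? Hw Hrho']; subst.
  destruct x as [| x]; simpl.
  - rewrite lift_closed by exact Hw. now apply substs_closed.
  - rewrite Nat.sub_0_r. apply IH; [assumption | lia].
Qed.

Lemma subst_substs rho : forall k w b, closed w -> Forall closed rho ->
  subst k w (substs (S k) rho b) = substs k rho (subst k w b).
Proof.
  induction rho as [| u rho IH]; simpl; intros k w b Hw Hrho; [reflexivity |].
  inversion Hrho; subst. rewrite IH by auto. now rewrite subst_comm_closed.
Qed.

Lemma closed_at_substs rho : forall k t, Forall closed rho ->
  closed_at (k + length rho) t -> closed_at k (substs k rho t).
Proof.
  induction rho as [| u rho IH]; simpl; intros k t Hrho Ht.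
  - now rewrite Nat.add_0_r in Ht.
  - inversion Hrho; subst. apply IH; [assumption |].
    apply closed_at_subst; [| lia | assumption].
    now replace (S (k + length rho)) with (k + S (length rho)) by lia.
Qed.

Lemma step_closed t u : step_bv t u -> closed t -> closed u.
Proof.
  unfold closed; induction 1 as [b v _ | a u u' _ IH | a a' u _ IH]; simpl.
  - intros [Hb Hv]. now apply closed_at_subst.
  - intros [Ha Hu]; auto.
  - intros [Ha Hu]; auto.
Qed.

Lemma steps_closed n t u : steps n t u -> closed t -> closed u.
Proof. induction 1; eauto using step_closed. Qed.

Lemma steps_appL n t t' u : steps n t t' -> steps n (App t u) (App t' u).
Proof. induction 1; econstructor; eauto using step_bv. Qed.

Lemma steps_appR n t u u' : steps n u u' -> steps n (App t u) (App t u').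
Proof. induction 1; econstructor; eauto using step_bv. Qed.

Lemma steps_trans n t u : steps n t u -> forall n' w, steps n' u w -> steps (n + n') t w.
Proof. induction 1; simpl; eauto using steps. Qed.

Lemma value_irreducible v u : is_value v -> ~ step_bv v u.
Proof. destruct v; simpl; [tauto | | tauto]. intros _ Hs; inversion Hs. Qed.

Lemma step_bv_diamond t u1 : step_bv t u1 -> forall u2, step_bv t u2 ->
  u1 = u2 \/ exists z, step_bv u1 z /\ step_bv u2 z.
Proof.
  induction 1 as [b v Hv | a u u' Hu IH | a a' u Ha IH]; intros u2 H2;
    inversion H2 as [b' v' Hv' | ? ? u'' Hu' | ? a'' ? Ha']; subst.
  - now left.
  - now elim (value_irreducible _ _ Hv Hu').
  - inversion Ha'.
  - now elim (value_irreducible _ _ Hv' Hu).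
  - destruct (IH _ Hu') as [-> | (z & H1 & H2')]; [now left |].
    right; eauto using step_bv.
  - right; eauto using step_bv.
  - inversion Ha.
  - right; eauto using step_bv.
  - destruct (IH _ Ha') as [-> | (z & H1 & H2')]; [now left |].
    right; eauto using step_bv.
Qed.

Lemma steps_to_value_step n u w : steps n u w -> is_value w ->
  forall u', step_bv u u' -> exists n', n = S n' /\ steps n' u' w.
Proof.
  induction 1 as [u | n u u1 w Hu1 Hs IH]; intros Hw u' Hu'.
  - now elim (value_irreducible _ _ Hw Hu').
  - exists n; split; [reflexivity |].
    destruct (step_bv_diamond _ _ Hu1 _ Hu') as [<- | (z & Hz1 & Hz')]; [assumption |].
    destruct (IH Hw _ Hz1) as (n' & -> & Hz). eauto using steps.
Qed.

(* Strong confluence makes the number of steps to a value, not only the value, unique. *)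
Lemma steps_value_unique n1 u w1 : steps n1 u w1 -> is_value w1 ->
  forall n2 w2, steps n2 u w2 -> is_value w2 -> n1 = n2 /\ w1 = w2.
Proof.
  induction 1 as [u | n1 u u1 w1 Hu1 Hs IH]; intros Hw1 n2 w2 H2 Hw2.
  - inversion H2 as [| ? ? u' ? Hu']; subst; [now split |].
    now elim (value_irreducible _ _ Hw1 Hu').
  - destruct (steps_to_value_step _ _ _ H2 Hw2 _ Hu1) as (n2' & -> & Hs2).
    destruct (IH Hw1 _ _ Hs2 Hw2) as [-> ->]. now split.
Qed.

Fixpoint Forall_budget {A} (P : A -> nat -> Prop) (l : list A) (j : nat) : Prop :=
  match l with
  | [] => True
  | x :: l' => exists j1 j2, j1 + j2 <= j /\ P x j1 /\ Forall_budget P l' j2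
  end.

Lemma Forall_budget_perm {A} (P : A -> nat -> Prop) l l' :
  Permutation l l' -> forall j, Forall_budget P l j -> Forall_budget P l' j.
Proof.
  induction 1 as [| x l l' _ IH | x y l | l l' l'' _ IH1 _ IH2]; simpl; intros j Hl; auto.
  - destruct Hl as (j1 & j2 & ? & ? & ?). exists j1, j2; auto.
  - destruct Hl as (j1 & j2 & ? & ? & (j3 & j4 & ? & ? & ?)).
    exists j3, (j1 + j4); split; [lia |]. split; [assumption |].
    exists j1, j4; split; [lia | auto].
Qed.

Lemma Forall_budget_Forall2_iff {A B} (R : A -> B -> Prop)
  (P : A -> nat -> Prop) (Q : B -> nat -> Prop) l l' :
  Forall2 R l l' -> (forall x y, In x l -> R x y -> forall k, P x k <-> Q y k) ->
  forall j, Forall_budget P l j <-> Forall_budget Q l' j.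
Proof.
  induction 1 as [| x y l l' Hxy _ IH]; simpl; intros HPQ j; [tauto |].
  assert (Hx : forall k, P x k <-> Q y k) by (apply HPQ; auto).
  assert (Hl : forall j, Forall_budget P l j <-> Forall_budget Q l' j)
    by (apply IH; intros; apply HPQ; auto).
  split; intros (j1 & j2 & ? & H1 & H2); exists j1, j2; split; auto;
    split; [apply Hx | apply Hl | apply Hx | apply Hl]; assumption.
Qed.

Lemma Forall_budget_app_inv {A} (P : A -> nat -> Prop) l1 l2 : forall j,
  Forall_budget P (l1 ++ l2) j ->
  exists j1 j2, j1 + j2 <= j /\ Forall_budget P l1 j1 /\ Forall_budget P l2 j2.
Proof.
  induction l1 as [| x l1 IH]; simpl; intros j Hl.
  - exists 0, j; auto.
  - destruct Hl as (j1 & j2 & ? & Hx & (a1 & a2 & ? & ? & ?)%IH).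
    exists (j1 + a1), a2; split; [lia |]. split; [| assumption].
    exists j1, a1; split; [lia | auto].
Qed.

Definition eval_within (P : term -> nat -> Prop) (t : term) (k : nat) : Prop :=
  exists z n k', steps n t z /\ is_value z /\ n + k' <= k /\ P z k'.

Lemma Forall_budget_eval_within {A} (P : A -> term -> nat -> Prop) t l : l <> [] ->
  forall k, Forall_budget (fun x => eval_within (P x) t) l k ->
  eval_within (fun z => Forall_budget (fun x => P x z) l) t k.
Proof.
  induction l as [| x l IH]; intros Hl k Hk; [now elim Hl |].
  destruct Hk as (k1 & k2 & ? & (z & n & k1' & Hs & Hz & ? & Hx) & Hrest).
  destruct l as [| y l].
  - exists z, n, k1'. repeat split; auto; [lia |]. exists k1', 0; split; [lia | auto].
  - destruct (IH ltac:(discriminate) k2 Hrest) as (z' & n' & k2' & Hs' & Hz' & ? & Hrest').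
    destruct (steps_value_unique _ _ _ Hs Hz _ _ Hs' Hz') as [<- <-].
    exists z, n, (k1' + k2'). repeat split; auto; [lia |].
    exists k1', k2'; split; [lia | auto].
Qed.

Definition closed_value (w : term) : Prop := is_value w /\ closed w.

Fixpoint realizes (L : ltype) (v : term) (k : nat) : Prop :=
  match L with
  | Tn => True
  | Tarr M L' => exists b, v = Lam b /\
      forall w j, closed_value w -> Forall_budget (fun A => realizes A w) M j ->
        eval_within (realizes L') (beta_subst b w) (k + j)
  end.

Fixpoint ltype_nested_ind (P : ltype -> Prop) (HTn : P Tn)
  (HTarr : forall M L, Forall P M -> P L -> P (Tarr M L)) (L : ltype) : P L :=
  match L with
  | Tn => HTn
  | Tarr M L' =>
      HTarr M L'
        ((fix all_P (M : list ltype) : Forall P M :=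
            match M with
            | [] => Forall_nil P
            | A :: M' => Forall_cons A (ltype_nested_ind P HTn HTarr A) (all_P M')
            end) M)
        (ltype_nested_ind P HTn HTarr L')
  end.

Lemma realizes_lt_equiv L : forall L', lt_equiv L L' ->
  forall v k, realizes L v k <-> realizes L' v k.
Proof.
  induction L as [| M L IHM IHL] using ltype_nested_ind; intros L' HL;
    inversion HL as [| ? M' Mp ? L'' Hp Hf HLL']; subst; [tauto |].
  assert (HM : forall w j, Forall_budget (fun A => realizes A w) M j <->
                           Forall_budget (fun A => realizes A w) M' j).
  { intros w j. transitivity (Forall_budget (fun A => realizes A w) Mp j).
    - split; apply Forall_budget_perm; [| apply Permutation_sym]; exact Hp.
    - apply (Forall_budget_Forall2_iff lt_equiv _ _ Mp M' Hf).
      intros A A' HA HAA'. rewrite Forall_forall in IHM.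
      apply IHM; [apply (Permutation_in _ (Permutation_sym Hp) HA) | exact HAA'].
  }
  intros v k; simpl.
  split; intros (b & -> & Hb); exists b; split; [reflexivity | | reflexivity |];
    intros w j Hw Hwj; apply HM in Hwj;
    destruct (Hb w j Hw Hwj) as (z & n & k' & ? & ? & ? & Hz);
    exists z, n, k'; repeat split; auto; apply (IHL L''); assumption.
Qed.

Lemma realizes_mt_equiv N M : mt_equiv N M ->
  forall w j, Forall_budget (fun A => realizes A w) N j ->
              Forall_budget (fun A => realizes A w) M j.
Proof.
  intros (Np & Hp & Hf) w j HN.
  apply (Forall_budget_perm _ _ _ Hp) in HN.
  apply (Forall_budget_Forall2_iff lt_equiv (fun A => realizes A w) (fun A => realizes A w)
           Np M Hf); [| exact HN].
  intros A A' _ HA. now apply realizes_lt_equiv.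
Qed.

Fixpoint ctx_realized (G : ctx) (rho : list term) (c : nat) : Prop :=
  match rho with
  | [] => ctx_is_empty G
  | w :: rho' => exists j c', j + c' <= c /\
      Forall_budget (fun A => realizes A w) (G 0) j /\ ctx_realized (ctx_tail G) rho' c'
  end.

Lemma ctx_realized_var rho : forall G c x L, ctx_realized G rho c -> G x = [L] ->
  exists j, j <= c /\ realizes L (nth x rho (Var 0)) j.
Proof.
  induction rho as [| w rho IH]; simpl; intros G c x L HG Hx.
  - rewrite HG in Hx; discriminate.
  - destruct HG as (j & c' & ? & Hw & Hrho). destruct x as [| x].
    + rewrite Hx in Hw. destruct Hw as (j1 & j2 & ? & ? & _).
      exists j1; split; [lia | assumption].
    + destruct (IH _ _ _ _ Hrho Hx) as (j' & ? & ?). exists j'; split; [lia | assumption].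
Qed.

Lemma ctx_realized_union rho : forall G D c, ctx_realized (ctx_union G D) rho c ->
  exists c1 c2, c1 + c2 <= c /\ ctx_realized G rho c1 /\ ctx_realized D rho c2.
Proof.
  induction rho as [| w rho IH]; simpl; intros G D c HGD.
  - exists 0, 0; split; [lia |].
    split; intro x; specialize (HGD x); unfold ctx_union in HGD;
      apply app_eq_nil in HGD; tauto.
  - destruct HGD as (j & c' & ? & (j1 & j2 & ? & ? & ?)%Forall_budget_app_inv & HGD).
    destruct (IH _ _ _ HGD) as (c1 & c2 & ? & ? & ?).
    exists (j1 + c1), (j2 + c2); split; [lia |].
    split; [exists j1, c1 | exists j2, c2]; auto.
Qed.

Definition sem_typed (G : ctx) (t : term) (P : term -> nat -> Prop) (m : nat) : Prop :=
  forall rho c, Forall closed_value rho -> closed_at (length rho) t ->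
    ctx_realized G rho c -> P (substs 0 rho t) (m + c).

Lemma Forall_closed_value_closed rho : Forall closed_value rho -> Forall closed rho.
Proof. apply Forall_impl. now intros w []. Qed.

Lemma sem_Var x L : sem_typed (ctx_single x [L]) (Var x) (eval_within (realizes L)) 0.
Proof.
  intros rho c Hrho Hx HG. simpl in Hx.
  rewrite substs_Var by auto using Forall_closed_value_closed.
  destruct (ctx_realized_var rho _ c x L HG) as (j & ? & HL).
  { unfold ctx_single. now rewrite Nat.eqb_refl. }
  exists (nth x rho (Var 0)), 0, j. repeat split; [constructor | | lia | exact HL].
  rewrite Forall_forall in Hrho. now apply Hrho, nth_In.
Qed.

Lemma sem_Lam_Tn t : sem_typed ctx_empty (Lam t) (eval_within (realizes Tn)) 0.
Proof.
  intros rho c _ _ _. rewrite substs_Lam.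
  exists (Lam (substs 1 rho t)), 0, 0. repeat split; [constructor | lia].
Qed.

Lemma sem_Lam G t L m : sem_typed G t (eval_within (realizes L)) m ->
  sem_typed (ctx_tail G) (Lam t) (eval_within (realizes (Tarr (G 0) L))) m.
Proof.
  intros Ht rho c Hrho Hb HG. rewrite substs_Lam.
  exists (Lam (substs 1 rho t)), 0, (m + c). repeat split; [constructor | lia |].
  exists (substs 1 rho t); split; [reflexivity |].
  intros w j Hw Hwj. unfold beta_subst.
  rewrite subst_substs by (apply Hw || apply Forall_closed_value_closed, Hrho).
  replace (m + c + j) with (m + (j + c)) by lia.
  apply (Ht (w :: rho)); [constructor; assumption | exact Hb | exists j, c; auto].
Qed.

Lemma mt_equiv_app_Tn_nonempty N M : mt_equiv N (M ++ [Tn]) -> N <> [].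
Proof.
  intros (Np & Hp & Hf) ->. apply Permutation_nil in Hp as ->.
  inversion Hf as [HM |]. destruct M; discriminate.
Qed.

(* The extra [Tn] forces the argument to reach a value even when [M] is empty. *)
Lemma sem_App G D t u M N L m m' :
  sem_typed G t (eval_within (realizes (Tarr M L))) m ->
  sem_typed D u (fun u' => Forall_budget (fun A => eval_within (realizes A) u') N) m' ->
  mt_equiv N (M ++ [Tn]) ->
  sem_typed (ctx_union G D) (App t u) (eval_within (realizes L)) (m + m' + 1).
Proof.
  intros Ht Hu HN rho c Hrho [Hct Hcu] HGD.
  destruct (ctx_realized_union _ _ _ _ HGD) as (c1 & c2 & ? & HG & HD).
  destruct (Ht rho c1 Hrho Hct HG) as (f & n1 & k1 & Hs1 & _ & ? & (b & -> & Hb)).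
  destruct (Forall_budget_eval_within _ _ _ (mt_equiv_app_Tn_nonempty _ _ HN) _
              (Hu rho c2 Hrho Hcu HD)) as (w & n2 & k2 & Hs2 & Hw & ? & HwN).
  assert (Hwc : closed w).
  { apply (steps_closed _ _ _ Hs2), closed_at_substs;
      [apply Forall_closed_value_closed, Hrho | exact Hcu]. }
  destruct (Forall_budget_app_inv _ _ _ _ (realizes_mt_equiv _ _ HN w k2 HwN))
    as (j1 & j2 & ? & HwM & _).
  destruct (Hb w j1 (conj Hw Hwc) HwM) as (z & n3 & k3 & Hs3 & ? & ? & ?).
  exists z, (n1 + (n2 + S n3)), k3. repeat split; auto; [| lia].
  rewrite substs_App.
  apply (steps_trans _ _ _ (steps_appL _ _ _ _ Hs1)).
  apply (steps_trans _ _ _ (steps_appR _ _ _ _ Hs2)).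
  econstructor; [apply sbv_root, Hw | exact Hs3].
Qed.

Lemma sem_many_cons G D t L M m m' :
  sem_typed G t (eval_within (realizes L)) m ->
  sem_typed D t (fun t' => Forall_budget (fun A => eval_within (realizes A) t') M) m' ->
  sem_typed (ctx_union G D) t
    (fun t' => Forall_budget (fun A => eval_within (realizes A) t') (L :: M)) (m + m').
Proof.
  intros HL HM rho c Hrho Ht HGD.
  destruct (ctx_realized_union _ _ _ _ HGD) as (c1 & c2 & ? & HG & HD).
  exists (m + c1), (m' + c2); split; [lia |]. auto.
Qed.

Scheme has_type_mut := Induction for has_type Sort Prop
with has_mtype_mut := Induction for has_mtype Sort Prop.

Lemma has_type_sound : forall G t L m e,
  has_type G t L m e -> sem_typed G t (eval_within (realizes L)) m.
Proof.
  apply (has_type_mut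
    (fun G t L m e _ => sem_typed G t (eval_within (realizes L)) m)
    (fun D u N m e _ =>
       sem_typed D u (fun u' => Forall_budget (fun A => eval_within (realizes A) u') N) m));
    eauto using sem_Var, sem_Lam_Tn, sem_Lam, sem_App, sem_many_cons.
  intros u rho c _ _ _. exact I.
Qed.

Theorem theorem7p2 :
  forall (t : term) (L : ltype) (m e : nat) (G : ctx),
    closed t ->
    ctx_is_empty G ->
    has_type G t L m e ->
    exists (v : term) (n : nat), is_value v /\ steps n t v /\ n <= m.
Proof.
  intros t L m e G Ht HG Hty.
  destruct (has_type_sound G t L m e Hty [] 0 (Forall_nil _) Ht HG)
    as (v & n & k & Hs & Hv & Hle & _).
  exists v, n. repeat split; [assumption | exact Hs | lia].
Qed.
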